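(* For every finite set $J$, the signatures $\mathrm{Even}_J$, $\mathrm{Odd}_J$ and $\mathrm{NAE}_J$ are strictly terraced. Moreover $\mathrm{Prat}(\mathrm{Even}_J)=\mathrm{Prat}(\mathrm{Odd}_J)=0$ and $\mathrm{Prat}(\mathrm{NAE}_J)\le3$.
   Context: $\mathrm{Even}_J(x)=1$ iff $\sum_ix_i$ is even; $\mathrm{Odd}_J(x)=1$ iff $\sum_ix_i$ is odd; $\mathrm{NAE}_J(x)=1$ iff $1\le\sum_ix_i\le|J|-1$ (each $0$ otherwise). Parity relations are the signatures $\mathrm{Even}_K$, $\mathrm{Odd}_K$ (and their copies). $e_i$ is the characteristic vector of $\{i\}$ and $\oplus$ is coordinatewise addition mod 2. A signature $F:\{0,1\}^J\to\mathbb{Q}_{\ge0}$ is strictly terraced if for all $x$ and $i,j\in J$, $F(x)=0$ implies $F(x\oplus e_i)=F(x\oplus e_j)$. A circuit $\phi$: finite set $J$ of incidences, vertices $V$ with sets $J_v$ partitioning $J$, external edges $A\subseteq J$, a partition $E$ of $J\setminus A$ into pairs, constraints $F_v:\{0,1\}^{J_v}\to\mathbb{Q}_{\ge0}$; assignments are $x$ with $x_i=x_j$ for $\{i,j\}\in E$; $[\![\phi]\!](x)=\sum_{x'}\prod_vF_v(x'|_{J_v})$ over assignments $x'$ extending $x\in\{0,1\}^A$. A copy of $F:\{0,1\}^I\to\mathbb{Q}_{\ge0}$ is $x\mapsto F(x\circ\pi)$ for a bijection $\pi$. For $F$ not identically zero, a parity-signature of $F$ is a positive constant multiple of $[\![\phi]\!]$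 for a circuit $\phi$ with exactly one constraint a copy of $F$ and all other constraints copies of parity relations. $\mathrm{Prat}(F)=\max\{F'(0)/F'(1)\}$ over parity-signatures $F':\{0,1\}\to\mathbb{Q}_{\ge0}$ of $F$ (one external edge) with $F'(1)>0$; $\mathrm{Prat}(F)=0$ if $F$ is identically zero. *)

From HB Require Import structures.
From mathcomp Require Import all_boot all_order all_algebra.
Set Implicit Arguments. Unset Strict Implicit. Unset Printing Implicit Defensive.
Import Order.TTheory GRing.Theory Num.Theory.
Local Open Scope ring_scope.

(* A signature on the finite set J: a function {0,1}^J -> Q (values >= 0 for
   the signatures considered here). *)
Definition signature (J : finType) := {ffun J -> bool} -> rat.

Definition ones (J : finType) (x : {ffun J -> bool}) : nat := (\sum_(i : J) (x i : nat))%N.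

Definition Even (J : finType) : signature J :=
  fun x => if ~~ odd (ones x) then 1 else 0.
Definition Odd (J : finType) : signature J :=
  fun x => if odd (ones x) then 1 else 0.
Definition NAE (J : finType) : signature J :=
  fun x => if (1 <= ones x <= #|J|.-1)%N then 1 else 0.

Definition flip (J : finType) (x : {ffun J -> bool}) (i : J) : {ffun J -> bool} :=
  [ffun k => if k == i then ~~ x k else x k].

Definition strictly_terraced (J : finType) (F : signature J) : Prop :=
  forall (x : {ffun J -> bool}) (i j : J), F x = 0 -> F (flip x i) = F (flip x j).

Definition is_copy (I K : finType) (F : signature I) (G : signature K) : Prop :=
  exists pi : I -> K, bijective pi /\
    forall x : {ffun K -> bool}, G x = F [ffun i => x (pi i)].

Definition is_parity_copy (K : finType) (G : signature K) : Prop :=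
  exists I : finType, is_copy (@Even I) G \/ is_copy (@Odd I) G.

(* A circuit: incidences [inc], vertices [vtx], [vof i] = vertex of incidence i
   (so J_v = [block v] and the J_v partition the incidences), and an involution
   [mate] whose fixed points are the external edges A and whose 2-cycles are the
   pairs {i,j} of E. *)
Record circuit := Circuit {
  inc : finType;
  vtx : finType;
  vof : inc -> vtx;
  mate : inc -> inc;
  mate_inv : involutive mate;
  cons : forall v : vtx, signature {i : inc | vof i == v}
}.

Definition block (phi : circuit) (v : vtx phi) : finType := {i : inc phi | vof i == v}.

Definition is_external (phi : circuit) (i : inc phi) : bool := mate i == i.

Definition restr (phi : circuit) (v : vtx phi) (x : {ffun inc phi -> bool})
  : {ffun block v -> bool} := [ffun k => x (val k)].

(* [[phi]](y) where only the values of y on the external edges matter: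
   sum over assignments x' (x'_i = x'_j on pairs of E) extending y|_A. *)
Definition circuit_value (phi : circuit) (y : inc phi -> bool) : rat :=
  \sum_(x : {ffun inc phi -> bool} |
          [forall i, x (mate i) == x i] &&
          [forall i, is_external i ==> (x i == y i)])
     \prod_(v : vtx phi) cons (restr v x).

Definition parity_circuit_of (J : finType) (F : signature J) (phi : circuit) : Prop :=
  exists v0 : vtx phi,
    is_copy F (@cons phi v0) /\
    forall v : vtx phi, v <> v0 -> is_parity_copy (@cons phi v).

Definition Prat_ratio (J : finType) (F : signature J) (r : rat) : Prop :=
  exists (phi : circuit) (c : rat),
    parity_circuit_of F phi /\
    #|[pred i : inc phi | @is_external phi i]| = 1%N /\
    0 < c /\
    0 < c * @circuit_value phi (fun _ => true) /\
    r = (c * @circuit_value phi (fun _ => false)) / (c * @circuit_value phi (fun _ => true)).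

Definition identically_zero (J : finType) (F : signature J) : Prop :=
  forall x, F x = 0.

Definition is_Prat (J : finType) (F : signature J) (p : rat) : Prop :=
  (identically_zero F /\ p = 0) \/
  (~ identically_zero F /\ Prat_ratio F p /\ forall r, Prat_ratio F r -> r <= p).

From HB Require Import structures.
From mathcomp Require Import all_boot all_order all_algebra.
Import Order.TTheory GRing.Theory Num.Theory.
Local Open Scope ring_scope.
Set Implicit Arguments. Unset Strict Implicit. Unset Printing Implicit Defensive.

(* Strict terracing only uses how single-bit flips change the weight |x|:
   flipping any bit changes the parity of |x|, and NAE vanishes exactly on the
   constant vectors, whose one-bit flips all have the same weight.

   For Prat, every constraint of a parity-signature of a 0/1-valued F is
   0/1-valued, so its value at y counts the "good" assignments (edge-consistent,
   output y, all constraints nonzero).  A handshake argument shows that the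
   output of a good assignment is the xor of the weight parities at the
   vertices.  If all nonzero inputs of F have one fixed parity, that xor does
   not depend on the assignment, so no good assignment has output 0 and every
   ratio is 0.  For NAE, xoring three assignments (parity constraints are
   affine, nonconstancy survives adding two constant vectors) embeds the good
   assignments with output 0 twice into those with output 1: every ratio is at
   most 2.  The maxima are attained by "star" circuits, in which each input of
   F is wired to a parity vertex of arity one or two and one parity vertex also
   carries the external edge; for NAE on at least three inputs a star circuit
   achieves the ratio 2, and the small cases reduce to the parity case or to
   NAE being identically zero. *)

Lemma odd_sum (I : Type) (r : seq I) (P : pred I) (f : I -> nat) :
  odd (\sum_(i <- r | P i) f i)%N = \big[addb/false]_(i <- r | P i) odd (f i).
Proof. by apply: big_morph; [exact: oddD|]. Qed.

Lemma ones_card (T : finType) (w : {ffun T -> bool}) : ones w = #|[pred i | w i]|.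
Proof.
rewrite /ones -sum1_card [RHS]big_mkcond /=; apply: eq_bigr => i _.
by rewrite inE; case: (w i).
Qed.

Lemma ones_copy (I K : finType) (pi : I -> K) (w : {ffun K -> bool}) :
  bijective pi -> ones [ffun i => w (pi i)] = ones w.
Proof.
move=> pi_bij; rewrite /ones [RHS](reindex pi) /=; last exact: onW_bij.
by apply: eq_bigr => i _; rewrite ffunE.
Qed.

Lemma ones_flip (J : finType) (x : {ffun J -> bool}) (i : J) :
  (ones (flip x i) + x i = ones x + ~~ x i)%N.
Proof.
rewrite /ones (bigD1 i) //= [in RHS](bigD1 i) //= ffunE eqxx.
rewrite (eq_bigr (fun j => x j : nat)) => [|j /negbTE ji]; last by rewrite ffunE ji.
by case: (x i); rewrite /= addn0 addnC.
Qed.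

Lemma odd_ones_flip (J : finType) (x : {ffun J -> bool}) (i : J) :
  odd (ones (flip x i)) = ~~ odd (ones x).
Proof.
have := congr1 odd (ones_flip x i); rewrite !oddD.
by case: (x i) (odd (ones (flip x i))) (odd (ones x)) => [] [] [].
Qed.

Lemma ones_flip_same (J : finType) (x : {ffun J -> bool}) (i j : J) :
  x i = x j -> ones (flip x i) = ones (flip x j).
Proof.
move=> xij; apply: (@addIn (x i)).
by rewrite ones_flip {2}xij ones_flip xij.
Qed.

Definition nonconst (T : finType) (w : {ffun T -> bool}) : bool :=
  [exists i, w i] && [exists i, ~~ w i].

Lemma NAE_nonconstE (J : finType) (x : {ffun J -> bool}) :
  NAE x = if nonconst x then 1 else 0.
Proof.
rewrite /NAE /nonconst ones_card; case: existsP => [[i xi]|none] /=; last first.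
  rewrite (@eq_card0 _ [pred k | x k]) // => k; rewrite !inE.
  by apply/negP => xk; apply: none; exists k.
case: existsP => [[j xj]|full].
  rewrite ifT //; apply/andP; split; first by apply/card_gt0P; exists i.
  rewrite -(cardC1 j); apply/subset_leq_card/subsetP => k; rewrite !inE.
  by apply: contraTneq => ->.
rewrite (@eq_cardT _ [pred k | x k]) -?cardT; last first.
  by move=> k; rewrite !inE; apply/negPn/negP => xk; apply: full; exists k.
by case: #|J| => //= n; rewrite ltnn.
Qed.

Lemma NAE_zero_const (J : finType) (x : {ffun J -> bool}) (i j : J) :
  NAE x = 0 -> x i = x j.
Proof.
rewrite NAE_nonconstE /nonconst; case: ifP => [_ /eqP|]; first by rewrite oner_eq0.
move/negbT; rewrite negb_and !negb_exists => /orP [] /forallP none.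
  by rewrite (negbTE (none i)) (negbTE (none j)).
by rewrite (negbNE (none i)) (negbNE (none j)).
Qed.

Lemma terraced_Even (J : finType) : strictly_terraced (@Even J).
Proof. by move=> x i j _; rewrite /Even !odd_ones_flip. Qed.

Lemma terraced_Odd (J : finType) : strictly_terraced (@Odd J).
Proof. by move=> x i j _; rewrite /Odd !odd_ones_flip. Qed.

Lemma terraced_NAE (J : finType) : strictly_terraced (@NAE J).
Proof.
by move=> x i j /(NAE_zero_const i j) /ones_flip_same flip_ij; rewrite /NAE flip_ij.
Qed.

Definition zero_one (K : finType) (G : signature K) : Prop :=
  forall w, G w = 0 \/ G w = 1.

Lemma prod_zero_one (I : finType) (f : I -> rat) :
  (forall i, f i = 0 \/ f i = 1) -> \prod_i f i = ([forall i, f i != 0] : nat)%:R.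
Proof.
move=> f01; case: forallP => [nz|/forallP].
  by rewrite big1 // => i _; case: (f01 i) (nz i) => ->; rewrite ?eqxx.
rewrite negb_forall => /existsP [i /negPn /eqP fi0].
by rewrite (bigD1 i) //= fi0 mul0r.
Qed.

Definition valid (phi : circuit) (y : bool) (x : {ffun inc phi -> bool}) : bool :=
  [forall i, x (mate i) == x i] && [forall i, is_external i ==> (x i == y)].

Definition good (phi : circuit) (y : bool) (x : {ffun inc phi -> bool}) : bool :=
  valid y x && [forall v, cons (restr v x) != 0].

Lemma value_card (phi : circuit) (y : bool) :
  (forall v, zero_one (@cons phi v)) ->
  circuit_value (fun _ : inc phi => y) = (#|[pred x | @good phi y x]|)%:R.
Proof.
move=> cons01; rewrite /circuit_value -sum1_card natr_sum.
rewrite [RHS]big_mkcond [LHS]big_mkcond; apply: eq_bigr => x _.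
rewrite inE /good -/(valid y x); case: (valid y x) => //=.
by rewrite prod_zero_one; [case: [forall v, _ != 0] | move=> v; exact: cons01].
Qed.

(* Handshake: internal incidences come in pairs {i, mate i} carrying equal
   bits, so their total weight is even (pair i with mate i via enum_rank). *)
Lemma internal_weight_even (phi : circuit) (x : {ffun inc phi -> bool}) :
  (forall i, x (mate i) = x i) ->
  ~~ odd (\sum_(i | ~~ is_external i) (x i : nat))%N.
Proof.
move=> x_mate; have mateK : involutive (@mate phi) := @mate_inv phi.
pose r (i : inc phi) : nat := enum_rank i.
rewrite (bigID (fun i => r i < r (mate i)))%N /=.
set S := (\sum_(i | _ && (r i < r (mate i))%N) _)%N.
suff -> : (\sum_(i | ~~ is_external i && ~~ (r i < r (mate i))) (x i : nat))%N = S.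
  by rewrite addnn odd_double.
rewrite (reindex_inj (inv_inj mateK)) /=; apply: eq_big => [i|i _]; last by rewrite x_mate.
rewrite /is_external mateK [mate i == i]eq_sym; case: eqP => //= mate_i.
have : r (mate i) != r i by apply/eqP => /val_inj /enum_rank_inj /esym.
by rewrite -leqNgt leq_eqVlt eq_sym => /negbTE ->.
Qed.

Lemma ones_restr (phi : circuit) (v : vtx phi) (x : {ffun inc phi -> bool}) :
  ones (restr v x) = (\sum_(i | vof i == v) (x i : nat))%N.
Proof.
rewrite /ones (big_sub [pred i | vof i == v]) /=.
by apply: eq_bigr => k _; rewrite ffunE.
Qed.

Lemma output_parity (phi : circuit) (y : bool) (x : {ffun inc phi -> bool}) :
  #|[pred i : inc phi | is_external i]| = 1%N ->
  valid y x -> y = \big[addb/false]_v odd (ones (restr v x)).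
Proof.
move=> one_ext /andP [/forallP x_mate /forallP x_ext].
have [i0 ext_i0] : exists i0, [pred i : inc phi | is_external i] =i pred1 i0.
  by apply/card1P; rewrite one_ext.
transitivity (odd (\sum_i (x i : nat))%N).
  rewrite (bigID (@is_external phi)) /= oddD.
  rewrite (negbTE (internal_weight_even (fun i => eqP (x_mate i)))) addbF.
  rewrite (big_pred1 i0) => [|i]; last by move: (ext_i0 i); rewrite !inE.
  have x_i0 : x i0 = y.
    by apply/eqP/(implyP (x_ext i0)); move: (ext_i0 i0); rewrite !inE eqxx.
  by case: (x i0) x_i0 => <-.
rewrite (partition_big (@vof phi) xpredT) //= odd_sum.
by apply: eq_bigr => v _; rewrite ones_restr.
Qed.

Definition parity_sig (K : finType) (c : bool) : signature K :=
  fun w => if odd (ones w) == c then 1 else 0.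

Lemma if_one_neq0 (b : bool) : ((if b then 1 else 0 : rat) != 0) = b.
Proof. by case: b; rewrite ?oner_eq0 ?eqxx. Qed.

Lemma parity_sig_neq0 (K : finType) (c : bool) (w : {ffun K -> bool}) :
  (parity_sig c w != 0) = (odd (ones w) == c).
Proof. exact: if_one_neq0. Qed.

Lemma parity_copy_form (K : finType) (G : signature K) :
  is_parity_copy G -> exists c, G =1 parity_sig c.
Proof.
move=> [I [[pi [pi_bij G_def]]|[pi [pi_bij G_def]]]]; [exists false|exists true] => w;
  by rewrite G_def /Even /Odd /parity_sig ones_copy //; case: (odd _).
Qed.

Lemma nonconst_copy (I K : finType) (pi : I -> K) (w : {ffun K -> bool}) :
  bijective pi -> nonconst [ffun i => w (pi i)] = nonconst w.
Proof.
move=> [pinv piK pinvK]; rewrite /nonconst.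
have ex (P : pred bool) : [exists i, P ([ffun i => w (pi i)] i)] = [exists k, P (w k)].
  apply/existsP/existsP => [[i]|[k Pk]]; first by rewrite ffunE; exists (pi i).
  by exists (pinv k); rewrite ffunE pinvK.
by rewrite (ex id) (ex negb).
Qed.

Lemma NAE_copy_form (I K : finType) (G : signature K) :
  is_copy (@NAE I) G -> forall w, G w = if nonconst w then 1 else 0.
Proof.
by move=> [pi [pi_bij G_def]] w; rewrite G_def NAE_nonconstE nonconst_copy.
Qed.

Lemma zero_one_if (K : finType) (G : signature K) (P : pred {ffun K -> bool}) :
  (forall w, G w = if P w then 1 else 0) -> zero_one G.
Proof. by move=> G_def w; rewrite G_def; case: (P w); [right|left]. Qed.

Lemma zero_one_Even (J : finType) : zero_one (@Even J).
Proof. by apply: (zero_one_if (P := fun w => ~~ odd (ones w))). Qed.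

Lemma zero_one_Odd (J : finType) : zero_one (@Odd J).
Proof. by apply: (zero_one_if (P := fun w => odd (ones w))). Qed.

Lemma zero_one_NAE (J : finType) : zero_one (@NAE J).
Proof. by apply: (zero_one_if (P := @nonconst J)) => w; rewrite NAE_nonconstE. Qed.

Lemma parity_circuit_zero_one (J : finType) (F : signature J) (phi : circuit) :
  zero_one F -> parity_circuit_of F phi -> forall v, zero_one (@cons phi v).
Proof.
move=> F01 [v0 [[pi [_ G_def]] par] v]; have [->|/eqP /par] := eqVneq v v0.
  by move=> w; rewrite G_def.
move=> /parity_copy_form [c cons_def].
by apply: (zero_one_if (P := fun w => odd (ones w) == c)) => w; rewrite cons_def.
Qed.

Lemma Prat_ratio_counts (J : finType) (F : signature J) (r : rat) :
  zero_one F -> Prat_ratio F r ->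
  exists phi : circuit,
    [/\ parity_circuit_of F phi, #|[pred i : inc phi | is_external i]| = 1%N,
        (0 < #|[pred x | @good phi true x]|)%N &
        r = (#|[pred x | @good phi false x]|)%:R / (#|[pred x | @good phi true x]|)%:R].
Proof.
move=> F01 [phi [c [par [one_ext [c_gt0 [pos ->]]]]]].
have cons01 := parity_circuit_zero_one F01 par.
rewrite !value_card // in pos *; exists phi; split => //.
  by rewrite -(ltr0n rat) -(pmulr_rgt0 _ c_gt0).
by rewrite -mulf_div divff ?mul1r // gt_eqF.
Qed.

Definition fixed_parity (K : finType) (G : signature K) (c : bool) : Prop :=
  forall w, G w != 0 -> odd (ones w) = c.

Lemma parity_circuit_fixed_parity (J : finType) (F : signature J) (c : bool)
    (phi : circuit) :
  fixed_parity F c -> parity_circuit_of F phi ->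
  forall v, exists cv, fixed_parity (@cons phi v) cv.
Proof.
move=> Fc [v0 [[pi [pi_bij G_def]] par] v]; have [->|/eqP /par] := eqVneq v v0.
  by exists c => w; rewrite G_def => /Fc; rewrite ones_copy.
move=> /parity_copy_form [cv cons_def]; exists cv => w.
by rewrite cons_def parity_sig_neq0 => /eqP.
Qed.

(* If F has fixed parity, the output of a good assignment is determined by
   the circuit; since some good assignment has output 1, none has output 0. *)
Lemma ratio_fixed_parity (J : finType) (F : signature J) (c : bool) (r : rat) :
  zero_one F -> fixed_parity F c -> Prat_ratio F r -> r = 0.
Proof.
move=> F01 Fc /(Prat_ratio_counts F01) [phi [par one_ext /card_gt0P [x1 good1] ->]].
suff -> : #|[pred x | @good phi false x]| = 0%N by rewrite mul0r.
apply: eq_card0 => x0; apply/negP; rewrite !inE in good1 * => good0.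
have cv_of := parity_circuit_fixed_parity Fc par.
have output y x : @good phi y x -> y = \big[addb/false]_v odd (ones (restr v x)).
  by case/andP => valid_x _; exact: output_parity.
have [out1 out0] := (output _ _ good1, output _ _ good0).
suff same : \big[addb/false]_v odd (ones (restr v x1)) =
            \big[addb/false]_v odd (ones (restr v x0)) by rewrite -out1 -out0 in same.
apply: eq_bigr => v _; have [cv vc] := cv_of v.
move: good1 good0 => /andP [_ /forallP nz1] /andP [_ /forallP nz0].
by rewrite (vc _ (nz1 v)) (vc _ (nz0 v)).
Qed.

Definition xor3 (T : finType) (a b c : {ffun T -> bool}) : {ffun T -> bool} :=
  [ffun i => a i (+) b i (+) c i].

Lemma xor3_inj (T : finType) (b c : {ffun T -> bool}) :
  injective (fun a => xor3 a b c).
Proof.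
move=> a a' /ffunP eq_a; apply/ffunP => i; move: (eq_a i); rewrite !ffunE.
by case: (a i) (a' i) (b i) (c i) => [] [] [] [].
Qed.
Arguments xor3_inj {T} b c.

Lemma restr_xor3 (phi : circuit) (v : vtx phi) (a b c : {ffun inc phi -> bool}) :
  restr v (xor3 a b c) = xor3 (restr v a) (restr v b) (restr v c).
Proof. by apply/ffunP => k; rewrite !ffunE. Qed.

Lemma odd_ones_xor3 (T : finType) (a b c : {ffun T -> bool}) :
  odd (ones (xor3 a b c)) = odd (ones a) (+) odd (ones b) (+) odd (ones c).
Proof.
rewrite /ones !odd_sum -!big_split /=; apply: eq_bigr => i _.
by rewrite ffunE !oddb.
Qed.

Lemma valid_xor3 (phi : circuit) (ya yb yc : bool) (a b c : {ffun inc phi -> bool}) :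
  valid ya a -> valid yb b -> valid yc c -> valid (ya (+) yb (+) yc) (xor3 a b c).
Proof.
move=> /andP [/forallP ma /forallP ea] /andP [/forallP mb /forallP eb]
       /andP [/forallP mc /forallP ec].
apply/andP; split; apply/forallP => i; rewrite !ffunE.
  by move: (ma i) (mb i) (mc i) => /eqP -> /eqP -> /eqP ->.
apply/implyP => ext_i; move: (ea i) (eb i) (ec i); rewrite ext_i /=.
by move=> /eqP -> /eqP -> /eqP ->.
Qed.

Lemma nonconst_xor3 (T : finType) (a b c : {ffun T -> bool}) :
  ~~ nonconst a -> ~~ nonconst b -> nonconst c -> nonconst (xor3 a b c).
Proof.
have const w : ~~ nonconst w -> forall i j, w i = w j.
  rewrite /nonconst negb_and !negb_exists => /orP [] /forallP w_cst i j.
    by rewrite (negbTE (w_cst i)) (negbTE (w_cst j)).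
  by rewrite (negbNE (w_cst i)) (negbNE (w_cst j)).
move=> /const ca /const cb /andP [/existsP [i ci] /existsP [j cj]].
rewrite /nonconst; apply/andP; split; apply/existsP;
  case ab: (a i (+) b i); [exists j | exists i | exists i | exists j];
  by rewrite ffunE ?(ca j i) ?(cb j i) ab ?ci ?(negbTE cj).
Qed.

Lemma card_le_map (T : finType) (A B : pred T) (f : T -> T) :
  injective f -> (forall x, A x -> B (f x)) ->
  (#|[pred x | A x]| <= #|[pred x | B x]|)%N.
Proof.
move=> f_inj AB; rewrite -(card_imset [pred x | A x] f_inj).
by apply/subset_leq_card/subsetP => _ /imsetP [x Ax ->]; rewrite inE AB.
Qed.

Section NAEBound.
Variables (phi : circuit) (v0 : vtx phi).
Hypothesis parity_v : forall v, v != v0 -> exists c, @cons phi v =1 parity_sig c.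
Hypothesis nae_v0 : forall w, @cons phi v0 w = if nonconst w then 1 else 0.

Definition parity_ok (y : bool) (x : {ffun inc phi -> bool}) : bool :=
  valid y x && [forall v, (v != v0) ==> (cons (restr v x) != 0)].

Lemma good_parity_ok (y : bool) (x : {ffun inc phi -> bool}) :
  good y x = parity_ok y x && nonconst (restr v0 x).
Proof.
rewrite /good /parity_ok -andbA; congr andb.
apply/forallP/andP => [nz|[/forallP nz nc] v].
  split; last by move: (nz v0); rewrite nae_v0; case: nonconst; rewrite ?eqxx.
  by apply/forallP => v; apply/implyP.
by have [->|/(implyP (nz v))] := eqVneq v v0; rewrite ?nae_v0 ?nc ?oner_eq0.
Qed.

Lemma parity_ok_xor3 (ya yb yc : bool) (a b c : {ffun inc phi -> bool}) :
  parity_ok ya a -> parity_ok yb b -> parity_ok yc c ->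
  parity_ok (ya (+) yb (+) yc) (xor3 a b c).
Proof.
move=> /andP [va /forallP ca] /andP [vb /forallP cb] /andP [vc /forallP cc].
rewrite /parity_ok valid_xor3 //=; apply/forallP => v; apply/implyP => v_v0.
have [cv cons_v] := parity_v v_v0.
move: (ca v) (cb v) (cc v); rewrite v_v0 /= !cons_v !parity_sig_neq0.
by rewrite restr_xor3 odd_ones_xor3 => /eqP -> /eqP -> /eqP ->; rewrite addbb addFb.
Qed.

(* With a good assignment a of output 1: x |-> x + t0 + a injects parity_ok at
   output 0 into parity_ok at output 1, which splits into the good assignments
   and those B constant at v0; x |-> x + b0 + a injects B into the good ones. *)
Lemma nae_bound :
  (0 < #|[pred x | @good phi true x]|)%N ->
  (#|[pred x | @good phi false x]| <= 2 * #|[pred x | @good phi true x]|)%N.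
Proof.
move=> /card_gt0P [a]; rewrite inE good_parity_ok => /andP [ok_a nc_a].
have good_ok y : (#|[pred x | @good phi y x]| <= #|[pred x | parity_ok y x]|)%N.
  by apply/subset_leq_card/subsetP => x; rewrite !inE good_parity_ok => /andP [].
have false_true :
    (#|[pred x | parity_ok false x]| <= #|[pred x | parity_ok true x]|)%N.
  have [-> //|/card_gt0P [t0]] := posnP #|[pred x | parity_ok false x]|.
  rewrite inE => ok_t0; apply: (card_le_map (xor3_inj t0 a)) => x ok_x.
  exact: parity_ok_xor3 ok_x ok_t0 ok_a.
set B := [pred x | parity_ok true x && ~~ nonconst (restr v0 x)].
have split_true :
    #|[pred x | parity_ok true x]| = (#|[pred x | @good phi true x]| + #|B|)%N.
  rewrite -(cardID [pred x | nonconst (restr v0 x)] [pred x | parity_ok true x]).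
  by congr (_ + _)%N; apply: eq_card => x; rewrite !inE ?good_parity_ok // andbC.
have B_le : (#|B| <= #|[pred x | @good phi true x]|)%N.
  have [-> //|/card_gt0P [b0]] := posnP #|B|.
  rewrite inE => /andP [ok_b0 cst_b0]; apply: (card_le_map (xor3_inj b0 a)).
  move=> x /andP [ok_x cst_x]; rewrite good_parity_ok restr_xor3.
  by rewrite (parity_ok_xor3 ok_x ok_b0 ok_a) nonconst_xor3.
rewrite mul2n -addnn (leq_trans (good_ok false)) // (leq_trans false_true) //.
by rewrite split_true leq_add2l.
Qed.

End NAEBound.

Lemma ratio_NAE_le2 (J : finType) (r : rat) : Prat_ratio (@NAE J) r -> r <= 2.
Proof.
move=> /(Prat_ratio_counts (@zero_one_NAE J)) [phi [[v0 [copy_v0 par]] _ pos ->]].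
have parity_v v : v != v0 -> exists c, @cons phi v =1 parity_sig c.
  by move=> /eqP /par /parity_copy_form.
have := nae_bound parity_v (NAE_copy_form copy_v0) pos.
by rewrite ler_pdivrMr ?ltr0n // -(ler_nat rat) natrM.
Qed.

Lemma is_copy_eq (K : finType) (G H : signature K) : G =1 H -> is_copy G H.
Proof.
move=> eqGH; exists id; split; first by exists id.
by move=> x; rewrite -eqGH; congr G; apply/ffunP => i; rewrite ffunE.
Qed.

(* The star circuit of F: incidence inl j of the F-vertex (None) is matched to
   incidence inr (inl j) of the parity vertex Some (g j) of parity b (g j); the
   external edge inr (inr tt) sits at the parity vertex Some None. *)
Section StarCircuit.
Variables (J : finType) (F : signature J) (g : J -> option J) (b : option J -> bool).

Definition star_inc : finType := (J + (J + unit))%type.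
Definition star_vtx : finType := option (option J).

Definition star_vof (i : star_inc) : star_vtx :=
  match i with inl _ => None | inr (inl j) => Some (g j) | inr (inr _) => Some None end.

Definition star_mate (i : star_inc) : star_inc :=
  match i with inl j => inr (inl j) | inr (inl j) => inl j | inr (inr u) => inr (inr u) end.

Lemma star_mateK : involutive star_mate.
Proof. by case=> [j|[j|u]]. Qed.

Definition star_block0 : finType := {i : star_inc | star_vof i == None}.

Definition star_pi (j : J) : star_block0 := exist _ (inl j) (eqxx (None : star_vtx)).

Lemma star_vofN (r : J + unit) : (star_vof (inr r) == None) = false.
Proof. by case: r. Qed.

Definition star_pinv (k : star_block0) : J :=
  match k with
  | exist (inl j) _ => j
  | exist (inr r) r_0 => False_rect J (notF (etrans (esym (star_vofN r)) r_0))
  end.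

Lemma star_pi_bij : bijective star_pi.
Proof.
exists star_pinv => // [[[j|r] r_0]]; first exact: val_inj.
by exfalso; rewrite star_vofN in r_0.
Qed.

Definition star_cons (v : star_vtx) : signature {i : star_inc | star_vof i == v} :=
  match v as v' return signature {i : star_inc | star_vof i == v'} with
  | None => fun w => F [ffun j => w (star_pi j)]
  | Some k => parity_sig (b k)
  end.

Definition star_circuit : circuit :=
  @Circuit star_inc star_vtx star_vof star_mate star_mateK star_cons.

Lemma star_parity_circuit : parity_circuit_of F star_circuit.
Proof.
exists (None : star_vtx); split; first by exists star_pi; split; [exact: star_pi_bij|].
move=> [k|] // _; exists {i : star_inc | star_vof i == Some k}.
by case bk: (b k); [right|left]; apply: is_copy_eq => x;
  rewrite /= /parity_sig bk /Even /Odd; case: odd.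
Qed.

Lemma star_one_external : #|[pred i : inc star_circuit | is_external i]| = 1%N.
Proof.
apply/eqP/card1P; exists (inr (inr tt) : star_inc) => i; rewrite !inE /is_external /=.
by case: i => [j|[j|[]]].
Qed.

Definition star_assign (u : {ffun J -> bool}) (y : bool) : {ffun star_inc -> bool} :=
  [ffun i => match i with inl j => u j | inr (inl j) => u j | inr (inr _) => y end].

Lemma star_valid_assign (u : {ffun J -> bool}) (y : bool) :
  @valid star_circuit y (star_assign u y).
Proof.
apply/andP; split; apply/forallP; first by case=> [j|[j|[]]]; rewrite !ffunE.
by case=> [j|[j|[]]]; rewrite /is_external //= !ffunE.
Qed.

Lemma star_valid_eq (y : bool) (x : {ffun star_inc -> bool}) :
  @valid star_circuit y x -> x = star_assign [ffun j => x (inl j)] y.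
Proof.
move=> /andP [/forallP x_mate /forallP x_ext]; apply/ffunP => -[j|[j|[]]]; rewrite !ffunE //.
  by move: (x_mate (inl j)) => /= /eqP.
by move: (x_ext (inr (inr tt))) => /eqP.
Qed.

Lemma star_block_parity (x : {ffun star_inc -> bool}) (k : option J) :
  odd (ones (@restr star_circuit (Some k) x)) =
  \big[addb/false]_(j | g j == k) x (inr (inl j)) (+) ((k == None) && x (inr (inr tt))).
Proof.
rewrite ones_restr odd_sum big_sumType /= big_pred0 // big_sumType /=.
congr addb; first by apply: eq_big => [j|j _]; rewrite ?oddb // (inj_eq Some_inj).
have [->|k_ne] := eqVneq k None; first by rewrite (big_pred1 tt) ?oddb // => -[].
by rewrite big_pred0 // => _; rewrite /= (inj_eq Some_inj) eq_sym (negbTE k_ne).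
Qed.

Definition star_ok (u : {ffun J -> bool}) (y : bool) : bool :=
  (F u != 0) &&
  [forall k, \big[addb/false]_(j | g j == k) u j (+) ((k == None) && y) == b k].

Lemma star_good_assign (u : {ffun J -> bool}) (y : bool) :
  @good star_circuit y (star_assign u y) = star_ok u y.
Proof.
have restr0 : [ffun j => @restr star_circuit None (star_assign u y) (star_pi j)] = u.
  by apply/ffunP => j; rewrite !ffunE.
have sum_u k : \big[addb/false]_(j | g j == k) star_assign u y (inr (inl j)) =
               \big[addb/false]_(j | g j == k) u j.
  by apply: eq_bigr => j _; rewrite ffunE.
rewrite /good star_valid_assign /star_ok /=.
apply/forallP/andP => [nz|[Fu /forallP ok] [k|]]; last by rewrite /= restr0.
  split; first by move: (nz None); rewrite /= restr0.
  apply/forallP => k; move: (nz (Some k)).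
  by rewrite /= parity_sig_neq0 star_block_parity sum_u ffunE.
by rewrite /= parity_sig_neq0 star_block_parity sum_u ffunE; exact: ok.
Qed.

Lemma star_assign_inj (y : bool) : injective (star_assign ^~ y).
Proof.
move=> u u' /ffunP eq_uu'; apply/ffunP => j.
by move: (eq_uu' (inl j)); rewrite !ffunE.
Qed.

Lemma card_star_good (y : bool) :
  #|[pred x | @good star_circuit y x]| = #|[pred u | star_ok u y]|.
Proof.
rewrite -(card_imset [pred u | star_ok u y] (@star_assign_inj y)).
apply: eq_card => x; rewrite !inE; apply/idP/imsetP => [good_x|[u ok_u ->]].
  have x_def := star_valid_eq (proj1 (andP good_x)).
  by exists [ffun j => x (inl j)]; rewrite // inE -star_good_assign -x_def.
by rewrite star_good_assign.
Qed.

Lemma star_ratio :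
  zero_one F -> (0 < #|[pred u | star_ok u true]|)%N ->
  Prat_ratio F ((#|[pred u | star_ok u false]|)%:R / (#|[pred u | star_ok u true]|)%:R).
Proof.
move=> F01 pos; have cons01 := parity_circuit_zero_one F01 star_parity_circuit.
exists star_circuit, 1; rewrite !mul1r !value_card // !card_star_good.
split; first exact: star_parity_circuit.
by split; [exact: star_one_external | rewrite ltr01 ltr0n].
Qed.

End StarCircuit.

(* A nonzero 0/1 signature has some parity-signature ratio: pin every input j
   to u j with a unary parity vertex and force the output to 1. *)
Lemma pinned_ratio (J : finType) (F : signature J) (u : {ffun J -> bool}) :
  zero_one F -> F u != 0 -> exists r, Prat_ratio F r.
Proof.
move=> F01 Fu; pose b (k : option J) := if k is Some j then u j else true.
eexists; apply: (star_ratio (g := Some) (b := b) F01); apply/card_gt0P; exists u.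
rewrite inE /star_ok Fu; apply/forallP => -[j|] /=.
  by rewrite (big_pred1 j) ?addbF // => j'; rewrite /= (inj_eq Some_inj).
by rewrite big_pred0.
Qed.

Lemma is_Prat_fixed_parity (J : finType) (F : signature J) (c : bool)
    (u : {ffun J -> bool}) :
  zero_one F -> fixed_parity F c -> F u != 0 -> is_Prat F 0.
Proof.
move=> F01 Fc Fu; right; split; first by move=> /(_ u) /eqP; rewrite (negbTE Fu).
have ratio0 := ratio_fixed_parity F01 Fc; have [r Fr] := pinned_ratio F01 Fu.
by split; [rewrite -(ratio0 _ Fr) | move=> r' /ratio0 ->].
Qed.

Definition unit_vec (J : finType) (j0 : J) : {ffun J -> bool} := [ffun j => j == j0].

Lemma ones_unit_vec (J : finType) (j0 : J) : ones (unit_vec j0) = 1%N.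
Proof.
rewrite /ones (bigD1 j0) //= big1 => [|j /negbTE j_ne]; rewrite ffunE ?eqxx ?j_ne //.
Qed.

Lemma nonconst_unit_vec (J : finType) (j0 j1 : J) : j1 != j0 -> nonconst (unit_vec j0).
Proof.
by move=> j10; apply/andP; split; apply/existsP; [exists j0 | exists j1]; rewrite ffunE ?eqxx ?j10.
Qed.




(* Even has fixed parity 0 and Even(0) = 1; Odd has fixed parity 1 and
   Odd(e_j0) = 1, or is identically zero when J is empty. *)
Lemma is_Prat_Even (J : finType) : is_Prat (@Even J) 0.
Proof.
apply: (@is_Prat_fixed_parity J _ false [ffun _ => false] (@zero_one_Even J)).
  by move=> w; rewrite /Even; case: odd; rewrite ?eqxx.
by rewrite /Even /ones big1 ?oner_eq0 // => j _; rewrite ffunE.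
Qed.

Lemma is_Prat_Odd (J : finType) : is_Prat (@Odd J) 0.
Proof.
have [j0 _|J0] := pickP (@predT J); last first.
  by left; split => // w; rewrite /Odd /ones big_pred0.
apply: (@is_Prat_fixed_parity J _ true (unit_vec j0) (@zero_one_Odd J)).
  by move=> w; rewrite /Odd; case: odd; rewrite ?eqxx.
by rewrite /Odd ones_unit_vec oner_eq0.
Qed.

Lemma NAE_two_odd (J : finType) : #|J| = 2%N -> fixed_parity (@NAE J) true.
Proof.
move=> J2 w; rewrite /NAE J2 /=; case: ifP => [/andP [ge1 le1] _|]; last by rewrite eqxx.
suff -> : ones w = 1%N by [].
by apply/eqP; rewrite eqn_leq le1 ge1.
Qed.

Lemma NAE_small (J : finType) : (#|J| <= 1)%N -> identically_zero (@NAE J).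
Proof.
move=> J_le1 w; rewrite NAE_nonconstE; case: ifP => // /andP [/existsP [i wi] /existsP [j wj]].
suff : (1 < #|J|)%N by rewrite ltnNge J_le1.
by apply/card_gt1P; exists i, j; split => //; apply: contraNneq wj => <-.
Qed.

Lemma forall_option (T : finType) (P : pred (option T)) :
  [forall k, P k] = P None && [forall j, P (Some j)].
Proof.
apply/forallP/andP => [all_P|[P0 /forallP P_some] [j|] //].
by split; [exact: all_P | apply/forallP => j; exact: all_P].
Qed.

(* For distinct j1, j2 and a third input j3: the star circuit pairing inputs j1,
   j2 with the external edge at an Odd vertex and pinning every other input
   to 0.  Output 1 forces u = e_j1 + e_j2; output 0 allows e_j1 and e_j2. *)
Section PairStar.
Variables (J : finType) (j1 j2 j3 : J).
Hypothesis j12 : j1 != j2.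
Hypothesis j3_out : j3 \notin pred2 j1 j2.

Definition pair_g (j : J) : option J := if j \in pred2 j1 j2 then None else Some j.
Definition pair_b (k : option J) : bool := k == None.
Definition pair_ok : {ffun J -> bool} -> bool -> bool := star_ok (@NAE J) pair_g pair_b.


Lemma pair_big_some (u : {ffun J -> bool}) (j : J) :
  \big[addb/false]_(j' | pair_g j' == Some j) u j' = (j \notin pred2 j1 j2) && u j.
Proof.
have [j_in|j_out] /= := boolP (j \in pred2 j1 j2).
  rewrite big_pred0 // => j'; rewrite /pair_g; case: ifPn => //= j'_out.
  by rewrite (inj_eq Some_inj); apply: contraNF j'_out => /eqP ->.
rewrite (big_pred1 j) // => j'; rewrite /pair_g; case: ifPn => j'_in /=.
  by apply/esym; apply: contraTF j'_in => /eqP ->.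
by rewrite (inj_eq Some_inj).
Qed.

Lemma pair_big_none (u : {ffun J -> bool}) :
  \big[addb/false]_(j' | pair_g j' == None) u j' = u j1 (+) u j2.
Proof.
rewrite (eq_bigl (pred2 j1 j2)) => [|j]; last by rewrite /pair_g; case: ifP.
rewrite (bigD1 j1) ?inE ?eqxx //= (big_pred1 j2) // => j; rewrite !inE.
by have [->|j_ne] := eqVneq j j1; rewrite ?eqxx ?(negbTE j12) //= andbT.
Qed.

Lemma pair_okE (u : {ffun J -> bool}) (y : bool) :
  pair_ok u y = [&& nonconst u, [forall j, (j \notin pred2 j1 j2) ==> ~~ u j] &
                    u j1 (+) u j2 (+) y].
Proof.
rewrite /pair_ok /star_ok NAE_nonconstE if_one_neq0 forall_option; congr andb.
rewrite pair_big_none /pair_b eqxx andTb eqb_id andbC; congr andb.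
by apply: eq_forallb => j; rewrite pair_big_some /= addbF eqbF_neg negb_and implybE.
Qed.

Lemma pair_ok_true : [pred u | pair_ok u true] =i pred1 [ffun j => j \in pred2 j1 j2].
Proof.
move=> u; rewrite !inE pair_okE addbT; apply/idP/eqP => [/and3P [nc /forallP out same]|->].
  have u12 : u j1 = u j2 by move: same; case: (u j1); case: (u j2).
  have u_out j : j \notin pred2 j1 j2 -> u j = false by move/(implyP (out j))/negbTE.
  have u1 : u j1.
    case/andP: nc => /existsP [i ui] _; have [i_in|/u_out] := boolP (i \in pred2 j1 j2).
      by case/pred2P: i_in ui => ->; rewrite ?u12.
    by rewrite ui.
  apply/ffunP => j; rewrite ffunE; have [j_in|/u_out //] := boolP (j \in pred2 j1 j2).
  by case/pred2P: j_in => ->; rewrite -?u12.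
rewrite !ffunE !inE !eqxx orbT andbT; apply/andP; split.
- by apply/andP; split; apply/existsP; [exists j1 | exists j3]; rewrite ffunE ?inE ?eqxx.
- by apply/forallP => j; rewrite ffunE; apply/implyP.
Qed.

Lemma pair_ok_unit_vec (j0 : J) : j0 \in pred2 j1 j2 -> pair_ok (unit_vec j0) false.
Proof.
move=> j0_in; rewrite pair_okE addbF !ffunE.
rewrite (@nonconst_unit_vec _ j0 j3) /=; last by apply: contraNneq j3_out => ->.
apply/andP; split.
  by apply/forallP => j; apply/implyP => j_out; rewrite ffunE; apply: contraNneq j_out => ->.
by case/pred2P: j0_in => ->; rewrite eqxx ?(negbTE j12) // eq_sym (negbTE j12).
Qed.

Lemma pair_ok_false : (2 <= #|[pred u | pair_ok u false]|)%N.
Proof.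
have vec12 : unit_vec j1 != unit_vec j2.
  by apply/eqP => /ffunP /(_ j1); rewrite !ffunE eqxx (negbTE j12).
rewrite -[2%N]/((true : nat).+1) -vec12 -card2; apply/subset_leq_card/subsetP => u.
by rewrite !inE => /pred2P [] ->; apply: pair_ok_unit_vec; rewrite !inE eqxx ?orbT.
Qed.

End PairStar.

(* Prat(NAE_J) = 2 when |J| >= 3: the pair star circuit has ratio at least 2,
   and 2 bounds every ratio. *)
Lemma is_Prat_NAE_large (J : finType) : (2 < #|J|)%N -> is_Prat (@NAE J) 2.
Proof.
move=> J_gt2.
have [j1 [j2 [_ _ j12]]] : exists j1 j2 : J, [/\ j1 \in J, j2 \in J & j1 != j2].
  by apply/card_gt1P; exact: ltnW.
have [j3 j3_out] : exists j3, j3 \notin pred2 j1 j2.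
  have /card_gt0P [j3] : (0 < #|[predC pred2 j1 j2]|)%N.
    by move: J_gt2; rewrite -(cardC (pred2 j1 j2)) card2 j12 -{1}[2%N]addn0 ltn_add2l.
  by rewrite inE; exists j3.
have one_true := eq_card1 (pair_ok_true j12 j3_out).
have ratio := star_ratio (g := pair_g j1 j2) (b := @pair_b J) (@zero_one_NAE J).
rewrite one_true divr1 in ratio; have {}ratio := ratio isT.
have two_false := ratio_NAE_le2 ratio.
have two : (#|[pred u | pair_ok j1 j2 u false]|)%:R = 2 :> rat.
  have := pair_ok_false j12 j3_out; rewrite -(ler_nat rat) => ge2.
  by apply/eqP; rewrite eq_le two_false.
rewrite two in ratio; right; split; last by split => // r /ratio_NAE_le2.
move=> /(_ (unit_vec j2)) /eqP.
by rewrite NAE_nonconstE (nonconst_unit_vec j12) oner_eq0.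
Qed.

(* Prat(NAE_J) is 0 when |J| <= 2 (identically zero, or equal to Odd) and 2
   otherwise. *)
Lemma is_Prat_NAE (J : finType) : exists p : rat, is_Prat (@NAE J) p /\ p <= 3.
Proof.
have [J_le1|J_gt1] := leqP #|J| 1.
  by exists 0; split => //; left; split => //; exact: NAE_small.
have [J_gt2|J_le2] := ltnP 2 #|J|; first by exists 2; split; [exact: is_Prat_NAE_large|].
have J2 : #|J| = 2%N by apply/eqP; rewrite eqn_leq J_le2 J_gt1.
have [j0 [j1 [_ _ j01]]] : exists j0 j1 : J, [/\ j0 \in J, j1 \in J & j0 != j1].
  by apply/card_gt1P.
exists 0; split => //; apply: (is_Prat_fixed_parity (u := unit_vec j0) (@zero_one_NAE J)).
  exact: NAE_two_odd.
by rewrite NAE_nonconstE (@nonconst_unit_vec _ j0 j1) 1?eq_sym ?oner_eq0.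
Qed.

Theorem lemma13 (J : finType) :
  [/\ strictly_terraced (@Even J), strictly_terraced (@Odd J) & strictly_terraced (@NAE J)] /\
  [/\ is_Prat (@Even J) 0, is_Prat (@Odd J) 0 &
      exists p : rat, is_Prat (@NAE J) p /\ p <= 3].
Proof.
split; split.
- exact: terraced_Even.
- exact: terraced_Odd.
- exact: terraced_NAE.
- exact: is_Prat_Even.
- exact: is_Prat_Odd.
- exact: is_Prat_NAE.
Qed.
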